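(* Let $(\Omega,\mathcal{F})$ be a measurable space, $\mathrm{B}_b$ the space of bounded real-valued measurable functions, $C\subset\mathrm{B}_b$ a linear subspace containing the constants, and $H\colon C\to\mathbb{R}$ a convex premium principle. Let $R_{\mathrm{Max}}(X):=\inf\{H(X_0)\mid X_0\in C,\ X_0\ge X\}$ for $X\in\mathrm{B}_b$ and $D_{\mathrm{Min}}(X):=H(X)-R_{\mathrm{Max}}(X)$ for $X\in C$. Let $\mathcal{P}:=\{\mathbb{P}\in\mathrm{ba}_+^1\mid H^*(\mathbb{P})<\infty\}$ and, for $\mathbb{P}\in\mathcal{P}$, $D_{\mathbb{P}}(X):=H(X-\mathbb{E}_{\mathbb{P}}(X))$ for $X\in C$. Then $$D_{\mathrm{Min}}(X)=\min_{\mathbb{P}\in\mathcal{P}}\big(D_{\mathbb{P}}(X)+H^*(\mathbb{P})\big)\quad\text{for all }X\in C.$$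
   Context: A premium principle is a map $H\colon C\to\mathbb{R}$ with $H(X+m)=H(X)+m$ for $X\in C$, $m\in\mathbb{R}$, $H(0)=0$, and $H(X)\ge0$ for $X\in C$ with $X\ge0$ (pointwise order). Convex means $H(\lambda X+(1-\lambda)Y)\le\lambda H(X)+(1-\lambda)H(Y)$ for $\lambda\in[0,1]$. $\mathrm{ba}_+^1$ is the set of finitely additive probability measures on $(\Omega,\mathcal{F})$, $\mathbb{E}_{\mathbb{P}}$ the associated integral, and $H^*(\mathbb{P}):=\sup_{X\in C}(\mathbb{E}_{\mathbb{P}}(X)-H(X))\in[0,\infty]$. *)

From HB Require Import structures.
From mathcomp Require Import all_boot all_order all_algebra.
From mathcomp Require Import all_classical all_reals all_analysis.
Set Implicit Arguments. Unset Strict Implicit. Unset Printing Implicit Defensive.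
Import Order.TTheory GRing.Theory Num.Theory.
Local Open Scope classical_set_scope.
Local Open Scope ring_scope.

Definition Bb (d : measure_display) (T : measurableType d) (R : realType)
  : set (T -> R) :=
  [set X : T -> R | measurable_fun setT X /\ exists M : R, forall w, `|X w| <= M].

Definition lin_subspace_with_consts (d : measure_display) (T : measurableType d)
  (R : realType) (C : set (T -> R)) : Prop :=
  [/\ C `<=` @Bb _ T R,
      (forall X Y, C X -> C Y -> C (X \+ Y)),
      (forall (a : R) X, C X -> C (fun w => a * X w)) &
      (forall m : R, C (fun _ => m))].

(* Premium principle H : C -> R (H is a total function, only its values on C matter). *)
Definition premium_principle (T : Type) (R : realType) (C : set (T -> R))
  (H : (T -> R) -> R) : Prop :=
  [/\ (forall X (m : R), C X -> H (fun w => X w + m) = H X + m),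
      H (fun _ => 0) = 0 &
      (forall X, C X -> (forall w, 0 <= X w) -> 0 <= H X)].

Definition convex_on (T : Type) (R : realType) (C : set (T -> R))
  (H : (T -> R) -> R) : Prop :=
  forall X Y (l : R), C X -> C Y -> 0 <= l <= 1 ->
    H (fun w => l * X w + (1 - l) * Y w) <= l * H X + (1 - l) * H Y.

(* ba_+^1 : finitely additive probability measures on (T, F);
   only the values on measurable sets are relevant. *)
Definition fa_prob (d : measure_display) (T : measurableType d) (R : realType)
  (P : set T -> R) : Prop :=
  [/\ P setT = 1,
      (forall A, measurable A -> 0 <= P A) &
      (forall A B, measurable A -> measurable B -> A `&` B = set0 ->
         P (A `|` B) = P A + P B)].

Definition fin_meas_partition (d : measure_display) (T : measurableType d)
  (n : nat) (A : nat -> set T) : Prop :=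
  [/\ (forall i, (i < n)%N -> measurable (A i)),
      (forall i j, (i < j < n)%N -> A i `&` A j = set0) &
      \bigcup_(i in [set k | (k < n)%N]) A i = setT].

(* Integral E_P(X) of a bounded measurable X w.r.t. a finitely additive
   probability P: supremum of the lower (Darboux) sums over finite measurable
   partitions. *)
Definition Eint (d : measure_display) (T : measurableType d) (R : realType)
  (P : set T -> R) (X : T -> R) : R :=
  sup [set s | exists n A, fin_meas_partition n A /\
        s = \sum_(i < n) inf (X @` A i) * P (A i)].

Definition Hstar (d : measure_display) (T : measurableType d) (R : realType)
  (C : set (T -> R)) (H : (T -> R) -> R) (P : set T -> R) : \bar R :=
  ereal_sup [set ((Eint P X - H X)%:E) | X in C].

Definition RMax (T : Type) (R : realType) (C : set (T -> R))
  (H : (T -> R) -> R) (X : T -> R) : \bar R :=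
  ereal_inf [set (H X0)%:E | X0 in [set Y | C Y /\ forall w, X w <= Y w]].

Definition DMin (T : Type) (R : realType) (C : set (T -> R))
  (H : (T -> R) -> R) (X : T -> R) : \bar R :=
  ((H X)%:E - RMax C H X)%E.

Definition calP (d : measure_display) (T : measurableType d) (R : realType)
  (C : set (T -> R)) (H : (T -> R) -> R) : set (set T -> R) :=
  [set P | fa_prob P /\ (Hstar C H P < +oo)%E].

Definition DP (d : measure_display) (T : measurableType d) (R : realType)
  (H : (T -> R) -> R) (P : set T -> R) (X : T -> R) : R :=
  H (fun w => X w - Eint P X).

From HB Require Import structures.
From mathcomp Require Import all_boot all_order all_algebra.
From mathcomp Require Import all_classical all_reals all_analysis.
From mathcomp Require Import wochoice ring lra.
Import Order.TTheory GRing.Theory Num.Theory.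
Local Open Scope classical_set_scope.
Local Open Scope ring_scope.

(* R_Max extends H to a functional rmax on B_b that is monotone, cash-additive,
   convex and below H on C.  Weak duality, E_P(Y0) - H^*(P) <= H(Y0) for
   Y0 >= X in C, gives the inequality.  For the minimiser, Hahn-Banach (proved
   with Zorn's lemma on sublinear minorants) applied to the directional
   derivative of rmax at X yields a linear g with g h <= rmax(X + h) - rmax(X) on
   B_b.  Such a g is positive and normalised, hence it is integration against
   the finitely additive probability P(A) := g(1_A), and for this P the
   conjugate H^*(P) equals g(X) - rmax(X), which makes the inequality an
   equality. *)

Section InfArith.
Context {R : realType}.
Implicit Types E : set R.

Lemma inf_le_add E1 E2 E3 : E1 !=set0 -> E2 !=set0 -> has_lbound E3 ->
  (forall a b, E1 a -> E2 b -> exists2 c, E3 c & c <= a + b) ->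
  inf E3 <= inf E1 + inf E2.
Proof.
move=> E1ne E2ne E3lb sumE; rewrite -lerBlDl.
apply: (lb_le_inf E2ne) => b E2b; suff : inf E3 - b <= inf E1 by lra.
apply: (lb_le_inf E1ne) => a E1a; have [c E3c cab] := sumE a b E1a E2b.
have := ge_inf E3lb E3c; lra.
Qed.

Lemma inf_pscale {E} {t : R} : 0 < t -> E !=set0 -> has_lbound E ->
  inf [set t * e | e in E] = t * inf E.
Proof.
move=> t0 [e0 Ee0] [b Eb].
have tElb : has_lbound [set t * e | e in E].
  by exists (t * b) => _ [e Ee <-]; rewrite ler_pM2l // Eb.
apply/eqP; rewrite eq_le; apply/andP; split.
  rewrite -ler_pdivrMl //; apply: lb_le_inf; first by exists e0.
  by move=> e Ee; rewrite ler_pdivrMl //; apply: ge_inf => //; exists e.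
apply: lb_le_inf; first by exists (t * e0), e0.
by move=> _ [e Ee <-]; rewrite ler_pM2l //; apply: ge_inf => //; exists b.
Qed.

End InfArith.

Lemma convex_combD (R : realType) (U : lmodType R) (x h k : U) (l a b : R) :
  l *: (x + a *: h) + (1 - l) *: (x + b *: k) = x + (l * a) *: h + ((1 - l) * b) *: k.
Proof. by rewrite !scalerDr !scalerA addrACA -scalerDl subrKC scale1r addrA. Qed.

Section Sublinear.
Context {R : realType} {U : lmodType R}.
Variable V : set U.
Hypotheses (V0 : V 0) (VD : forall {x y}, V x -> V y -> V (x + y))
  (VZ : forall (a : R) {x}, V x -> V (a *: x)).

Definition sublinear_on (q : U -> R) :=
  (forall x y, V x -> V y -> q (x + y) <= q x + q y) /\
  (forall (t : R) x, 0 < t -> V x -> q (t *: x) = t * q x).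

Definition linear_on (f : U -> R) :=
  forall (a : R) x y, V x -> V y -> f (a *: x + y) = a * f x + f y.

Lemma subspaceN {x} : V x -> V (- x).
Proof. by move=> Vx; rewrite -scaleN1r; apply: VZ. Qed.

Lemma sublinear0 q : sublinear_on q -> q 0 = 0.
Proof. by case=> _ /(_ 2 0 (ltr0Sn _ 1) V0); rewrite scaler0; lra. Qed.

Lemma sublinear_oppr {q x} : sublinear_on q -> V x -> - q (- x) <= q x.
Proof.
move=> sq Vx; have := sq.1 _ _ Vx (subspaceN Vx); rewrite subrr sublinear0 //; lra.
Qed.

Lemma sublinearZ {q t x} : sublinear_on q -> 0 <= t -> V x -> q (t *: x) = t * q x.
Proof.
move=> sq; rewrite le0r => /orP[/eqP->|t0] Vx; last exact: sq.2.
by rewrite scale0r mul0r sublinear0.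
Qed.

Lemma linear_on0 {f} : linear_on f -> f 0 = 0.
Proof. by move=> f_lin; have := f_lin 1 0 0 V0 V0; rewrite scale1r addr0 mul1r; lra. Qed.

Lemma linear_onD {f x y} : linear_on f -> V x -> V y -> f (x + y) = f x + f y.
Proof. by move=> f_lin Vx Vy; have := f_lin 1 x y Vx Vy; rewrite scale1r mul1r. Qed.

Lemma linear_onN {f x} : linear_on f -> V x -> f (- x) = - f x.
Proof.
move=> f_lin Vx; have := f_lin (-1) x 0 Vx V0.
by rewrite !addr0 linear_on0 // addr0 scaleN1r mulN1r.
Qed.

Variable p : U -> R.
Hypothesis p_sublinear : sublinear_on p.

Definition minorant : {pred U -> R} :=
  fun q => `[< sublinear_on q /\ forall x, V x -> q x <= p x >].

(* Maximal elements for ge_on are the pointwise minimal minorants. *)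
Definition ge_on : rel (U -> R) := fun q1 q2 => `[< forall x, V x -> q2 x <= q1 x >].

Lemma minorantP q : q \in minorant <-> sublinear_on q /\ forall x, V x -> q x <= p x.
Proof. by rewrite unfold_in; split => /asboolP. Qed.

Lemma ge_onP q1 q2 : ge_on q1 q2 <-> forall x, V x -> q2 x <= q1 x.
Proof. by split => /asboolP. Qed.

Section ChainBound.
Variable Ch : {pred U -> R}.
Hypotheses (Ch_minorant : {subset Ch <= minorant}) (Ch_total : {in Ch &, total ge_on}).

(* p is added so that the infimum is taken over a nonempty family. *)
Let A := [set q | q = p \/ q \in Ch].
Let chain_inf x := inf [set a x | a in A].

Let A_minorant {a} : A a -> a \in minorant.
Proof.
by case=> [->|/Ch_minorant//]; apply/minorantP; split => // x _; rewrite lexx.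
Qed.

Let A_lb {a x} : A a -> V x -> - p (- x) <= a x.
Proof.
move=> /A_minorant/minorantP[sa ap] Vx; apply: le_trans (sublinear_oppr sa Vx).
by rewrite lerN2; apply/ap/subspaceN.
Qed.

Let A_ne x : [set a x | a in A] !=set0.
Proof. by exists (p x), p => //; left. Qed.

Let A_has_lbound {x} : V x -> has_lbound [set a x | a in A].
Proof. by move=> Vx; exists (- p (- x)) => _ [a Aa <-]; apply: A_lb. Qed.

Let chain_inf_le a x : A a -> V x -> chain_inf x <= a x.
Proof. by move=> Aa Vx; apply: ge_inf; [exact: A_has_lbound | exists a]. Qed.

Let A_directed {a b} : A a -> A b ->
  exists2 c, A c & forall x, V x -> c x <= a x /\ c x <= b x.
Proof.
have below_p c : A c -> forall x, V x -> c x <= p x.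
  by move=> /A_minorant/minorantP[_].
move=> Aa Ab; case: (Aa) => [->|Cha].
  by exists b => // x Vx; rewrite lexx below_p.
case: (Ab) => [->|Chb].
  by exists a => // x Vx; rewrite lexx below_p.
case/orP: (Ch_total a b Cha Chb) => /ge_onP ab.
  by exists b => // x Vx; rewrite lexx ab.
by exists a => // x Vx; rewrite lexx ab.
Qed.

Lemma chain_inf_sublinear : sublinear_on chain_inf.
Proof.
split=> [x y Vx Vy | t x t0 Vx].
  apply: inf_le_add => [||| _ _ [a Aa <-] [b Ab <-]]; rewrite ?A_ne //.
    exact/A_has_lbound/VD.
  have [c Ac cab] := A_directed Aa Ab.
  have /minorantP[[c_add _] _] := A_minorant Ac.
  exists (c (x + y)); first by exists c.
  by apply: le_trans (c_add _ _ Vx Vy) _; apply: lerD; apply cab.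
rewrite /chain_inf -(inf_pscale t0 (A_ne x) (A_has_lbound Vx)).
congr inf; apply/seteqP; split=> _ [a Aa <-].
  have /minorantP[[_ aZ] _] := A_minorant Aa.
  by rewrite aZ //; exists (a x) => //; exists a.
case: Aa => b Ab <-; have /minorantP[[_ bZ] _] := A_minorant Ab.
by exists b => //; rewrite bZ.
Qed.

Lemma chain_bound : exists2 z, z \in minorant & upper_bound ge_on Ch z.
Proof.
exists chain_inf.
  apply/minorantP; split; first exact: chain_inf_sublinear.
  by move=> x Vx; apply: chain_inf_le => //; left.
by move=> q Chq; apply/ge_onP => x Vx; apply: chain_inf_le => //; right.
Qed.

End ChainBound.

Section ShiftInf.
Variables (q : U -> R) (h : U).
Hypotheses (q_sublinear : sublinear_on q) (Vh : V h).

(* A sublinear q is compared with the smaller sublinear function shift_inf q h,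
   which satisfies shift_inf q h (- h) <= - q h. *)
Definition shift_inf k := inf [set q (k + t *: h) - t * q h | t in [set t : R | 0 <= t]].

Let shifts_ne k : [set q (k + t *: h) - t * q h | t in [set t : R | 0 <= t]] !=set0.
Proof. by exists (q (k + 0 *: h) - 0 * q h); exists 0; rewrite /= ?lexx. Qed.

Let shifts_has_lbound {k} : V k ->
  has_lbound [set q (k + t *: h) - t * q h | t in [set t : R | 0 <= t]].
Proof.
move=> Vk; exists (- q (- k)) => _ [t t0 <-].
rewrite -(sublinearZ q_sublinear t0 Vh).
have := q_sublinear.1 _ _ (VD Vk (VZ t Vh)) (subspaceN Vk).
by rewrite addrC addKr; lra.
Qed.

Let shift_inf_le {k t} : V k -> 0 <= t -> shift_inf k <= q (k + t *: h) - t * q h.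
Proof. by move=> Vk t0; apply: ge_inf; [exact: shifts_has_lbound | exists t]. Qed.

Lemma shift_inf_le_self {k} : V k -> shift_inf k <= q k.
Proof. by move=> Vk; have := shift_inf_le Vk (lexx 0); rewrite scale0r addr0 mul0r subr0. Qed.

Lemma shift_inf_opp : shift_inf (- h) <= - q h.
Proof.
have := shift_inf_le (subspaceN Vh) ler01.
by rewrite scale1r addNr sublinear0 // mul1r sub0r.
Qed.

Lemma shift_inf_sublinear : sublinear_on shift_inf.
Proof.
split=> [x y Vx Vy | s k s0 Vk].
  apply: inf_le_add => [||| _ _ [t1 t10 <-] [t2 t20 <-]]; rewrite ?shifts_ne //.
    exact/shifts_has_lbound/VD.
  exists (q (x + y + (t1 + t2) *: h) - (t1 + t2) * q h).
    by exists (t1 + t2) => //; exact: addr_ge0.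
  have := q_sublinear.1 _ _ (VD Vx (VZ t1 Vh)) (VD Vy (VZ t2 Vh)).
  by rewrite addrACA -scalerDl; lra.
rewrite /shift_inf -(inf_pscale s0 (shifts_ne k) (shifts_has_lbound Vk)).
have s_ne0 : s != 0 by rewrite gt_eqF.
congr inf; apply/seteqP; split=> [_ [t t0 <-] | _ [_ [t t0 <-] <-]].
  exists (q (k + (t / s) *: h) - t / s * q h); last first.
    rewrite mulrBr mulrA mulrCA divff // mulr1 -(q_sublinear.2 _ _ s0); last first.
      by apply/VD/VZ.
    by rewrite scalerDr scalerA mulrCA divff // mulr1.
  by exists (t / s) => //; rewrite /= divr_ge0 // ltW.
exists (s * t); first by rewrite /= mulr_ge0 // ltW.
rewrite mulrBr mulrA -(q_sublinear.2 _ _ s0); last by apply/VD/VZ.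
by rewrite scalerDr scalerA.
Qed.

End ShiftInf.
Arguments shift_inf_le_self {q h} _ _ {k} _.
Arguments shift_inf_opp {q h}.

Lemma minimal_minorant_odd {q0} : q0 \in minorant -> {in minorant, maximal ge_on q0} ->
  forall h, V h -> q0 (- h) = - q0 h.
Proof.
move=> /minorantP[q0_sub q0_le] q0_min h Vh.
have shift_minorant : shift_inf q0 h \in minorant.
  apply/minorantP; split; first exact: shift_inf_sublinear.
  by move=> x Vx; apply: le_trans (shift_inf_le_self q0_sub Vh Vx) (q0_le _ Vx).
have /ge_onP q0_le_shift : ge_on (shift_inf q0 h) q0.
  by apply: q0_min => //; apply/ge_onP => x Vx; apply: shift_inf_le_self.
apply/eqP; rewrite eq_le; apply/andP; split.
  exact: le_trans (q0_le_shift _ (subspaceN Vh)) (shift_inf_opp q0_sub Vh).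
by have := sublinear_oppr q0_sub (subspaceN Vh); rewrite opprK; lra.
Qed.

Lemma minimal_minorant_linear {q0} : q0 \in minorant ->
  {in minorant, maximal ge_on q0} -> linear_on q0.
Proof.
move=> q0_minorant q0_min; have q0N := minimal_minorant_odd q0_minorant q0_min.
move/minorantP: q0_minorant => [q0_sub _].
have q0D x y : V x -> V y -> q0 (x + y) = q0 x + q0 y.
  move=> Vx Vy; apply/eqP; rewrite eq_le q0_sub.1 //=.
  have := q0_sub.1 _ _ (subspaceN Vx) (subspaceN Vy).
  by rewrite -opprD !q0N //; [lra | exact: VD].
have q0Z a x : V x -> q0 (a *: x) = a * q0 x.
  move=> Vx; case: (leP 0 a) => a0; first exact: sublinearZ.
  rewrite -[a]opprK scaleNr q0N; last by apply: VZ.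
  by rewrite sublinearZ ?oppr_ge0 ?(ltW a0) //; ring.
by move=> a x y Vx Vy; rewrite q0D ?q0Z //; exact: VZ.
Qed.

Theorem hahn_banach : exists2 f, linear_on f & forall x, V x -> f x <= p x.
Proof.
have ge_on_refl : {in minorant, reflexive ge_on}.
  by move=> q _; apply/ge_onP => *; rewrite lexx.
have ge_on_trans : {in minorant & &, transitive ge_on}.
  move=> q2 q1 q3 _ _ _ /ge_onP h12 /ge_onP h23; apply/ge_onP => x Vx.
  exact: le_trans (h23 _ Vx) (h12 _ Vx).
have [q0 q0_minorant q0_min] := Zorn's_lemma ge_on_refl ge_on_trans
  (fun Ch Ch_minorant Ch_chain => chain_bound _ Ch_minorant (wo_chainW Ch_chain)).
exists q0; first exact: minimal_minorant_linear q0_minorant q0_min.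
by case/minorantP: q0_minorant.
Qed.

End Sublinear.
Arguments linear_on0 {R U V} V0 {f}.
Arguments linear_onD {R U V f x y}.
Arguments linear_onN {R U V} V0 {f x}.

Section ConvexSubgradient.
Context {R : realType} {U : lmodType R}.
Variable V : set U.
Hypotheses (V0 : V 0) (VD : forall {x y}, V x -> V y -> V (x + y))
  (VZ : forall (a : R) {x}, V x -> V (a *: x)).
Variable f : U -> R.
Hypothesis f_convex : forall {x y} {l : R}, V x -> V y -> 0 < l < 1 ->
  f (l *: x + (1 - l) *: y) <= l * f x + (1 - l) * f y.
Variable x : U.
Hypothesis Vx : V x.

Definition incr_quot h t := (f (x + t *: h) - f x) / t.
Definition dir_deriv h := inf [set incr_quot h t | t in [set t : R | 0 < t]].

Let Vxh {h} t : V h -> V (x + t *: h).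
Proof. by move=> Vh; apply/VD/VZ. Qed.

(* x is the convex combination of x + t h and x - h with weights 1/(1+t), t/(1+t). *)
Lemma incr_quot_ge {h t} : V h -> 0 < t -> f x - f (x - h) <= incr_quot h t.
Proof.
move=> Vh t0; have t1 : 0 < 1 + t by rewrite addr_gt0.
pose l := (1 + t)^-1; have l_t : 1 - l = l * t.
  by rewrite /l; field; rewrite gt_eqF.
have l01 : 0 < l < 1.
  by rewrite invr_gt0 t1 /= invf_lt1 // ltrDl.
have := f_convex (Vxh t Vh) (Vxh (-1) Vh) l01.
rewrite convex_combD l_t mulrN1 scaleNr addrK scaleN1r -mulrA -mulrDr.
rewrite ler_pdivlMl // /incr_quot ler_pdivlMr //; lra.
Qed.

Let quots_ne h : [set incr_quot h t | t in [set t : R | 0 < t]] !=set0.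
Proof. by exists (incr_quot h 1), 1 => //=; exact: ltr01. Qed.

Let quots_has_lbound {h} : V h -> has_lbound [set incr_quot h t | t in [set t : R | 0 < t]].
Proof. by move=> Vh; exists (f x - f (x - h)) => _ [t t0 <-]; apply: incr_quot_ge. Qed.

Lemma dir_deriv_le {h t} : V h -> 0 < t -> dir_deriv h <= incr_quot h t.
Proof. by move=> Vh t0; apply: ge_inf; [exact: quots_has_lbound | exists t]. Qed.

Lemma incr_quotD {h k t1 t2} : V h -> V k -> 0 < t1 -> 0 < t2 ->
  incr_quot (h + k) (t1 * t2 / (t1 + t2)) <= incr_quot h t1 + incr_quot k t2.
Proof.
move=> Vh Vk t10 t20; have t12 : 0 < t1 + t2 by rewrite addr_gt0.
pose l := t2 / (t1 + t2); have l01 : 0 < l < 1.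
  by rewrite divr_gt0 //= ltr_pdivrMr // mul1r ltrDr.
have := f_convex (Vxh t1 Vh) (Vxh t2 Vk) l01.
have -> : l *: (x + t1 *: h) + (1 - l) *: (x + t2 *: k) = x + t1 * t2 / (t1 + t2) *: (h + k).
  rewrite convex_combD -addrA scalerDr; congr (_ + (_ *: _ + _ *: _)); rewrite /l; field.
    by rewrite gt_eqF.
  by rewrite gt_eqF.
rewrite /incr_quot => cvx.
have -> : (f (x + t1 *: h) - f x) / t1 + (f (x + t2 *: k) - f x) / t2 =
    (l * f (x + t1 *: h) + (1 - l) * f (x + t2 *: k) - f x) / (t1 * t2 / (t1 + t2)).
  by rewrite /l; field; rewrite !gt_eqF.
apply: ler_wpM2r; last by rewrite lerD2r.
by rewrite invr_ge0 ltW // divr_gt0 ?mulr_gt0.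
Qed.

Lemma dir_deriv_sublinear : sublinear_on V dir_deriv.
Proof.
split=> [h k Vh Vk | s h s0 Vh].
  apply: inf_le_add => [||| _ _ [t1 t10 <-] [t2 t20 <-]]; rewrite ?quots_ne //.
    exact/quots_has_lbound/VD.
  exists (incr_quot (h + k) (t1 * t2 / (t1 + t2))); last exact: incr_quotD.
  by exists (t1 * t2 / (t1 + t2)) => //; rewrite /= divr_gt0 ?mulr_gt0 ?addr_gt0.
have s_ne0 : s != 0 by rewrite gt_eqF.
have quotZ t : 0 < t -> incr_quot (s *: h) t = s * incr_quot h (t * s).
  by move=> t0; rewrite /incr_quot scalerA; field; rewrite s_ne0 gt_eqF.
rewrite /dir_deriv -(inf_pscale s0 (quots_ne h) (quots_has_lbound Vh)).
congr inf; apply/seteqP; split=> [_ [t t0 <-] | _ [_ [t t0 <-] <-]].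
  rewrite quotZ //; exists (incr_quot h (t * s)) => //.
  by exists (t * s) => //; rewrite /= mulr_gt0.
exists (t / s); first by rewrite /= divr_gt0.
by rewrite quotZ ?divr_gt0 // divfK.
Qed.

Theorem convex_subgradient :
  exists2 g, linear_on V g & forall h, V h -> g h <= f (x + h) - f x.
Proof.
have [g g_lin g_le] := @hahn_banach _ _ V V0 (@VD) (@VZ) _ dir_deriv_sublinear.
exists g => // h Vh; apply: le_trans (g_le _ Vh) _.
by have := dir_deriv_le Vh ltr01; rewrite /incr_quot scale1r divr1.
Qed.

End ConvexSubgradient.
Arguments convex_subgradient {R U V} V0 VD VZ {f} f_convex {x}.

Section BoundedMeasurable.
Context {d : measure_display} {T : measurableType d} {R : realType}.
Implicit Types Y Z : T -> R.

Lemma Bb_add {Y Z} : Bb Y -> Bb Z -> Bb (Y + Z).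
Proof.
move=> [mY [M1 Y_le]] [mZ [M2 Z_le]]; split; first exact: measurable_realfun.measurable_funD.
by exists (M1 + M2) => w; apply: le_trans (ler_normD _ _) _; apply: lerD.
Qed.

Lemma Bb_scale (a : R) {Y} : Bb Y -> Bb (a *: Y).
Proof.
move=> [mY [M Y_le]]; split.
  exact: (measurable_realfun.measurable_funM (measurable_cst a) mY).
by exists (`|a| * M) => w; rewrite normrM ler_wpM2l.
Qed.

Lemma Bb_opp {Y} : Bb Y -> Bb (- Y).
Proof. by move=> BY; rewrite -scaleN1r; apply: Bb_scale. Qed.

Lemma Bb_cst (c : R) : Bb (cst c : T -> R).
Proof. by split; [exact: measurable_cst | exists `|c|]. Qed.

Lemma Bb_indic {A : set T} : measurable A -> Bb (\1_A : T -> R).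
Proof.
move=> mA; split; first exact: measurable_realfun.measurable_indic.
by exists 1 => w; rewrite indicE; case: (w \in A); rewrite ?normr1 ?normr0.
Qed.

Lemma Bb_bounded {Y} : Bb Y -> exists2 M, 0 <= M & forall w, - M <= Y w <= M.
Proof.
move=> [_ [M Y_le]]; exists (Num.max M 0); first by rewrite le_max lexx orbT.
move=> w; have := Y_le w; rewrite ler_norml => /andP[MY YM].
by rewrite (le_trans _ MY) ?(le_trans YM) // ?lerN2 le_max lexx.
Qed.

End BoundedMeasurable.

Lemma fa_prob0 {d : measure_display} {T : measurableType d} {R : realType}
  (P : set T -> R) : fa_prob P -> P set0 = 0.
Proof.
case=> _ _ Padd; have := Padd set0 set0 measurable0 measurable0 (setI0 _).
by rewrite setU0; lra.
Qed.

Section Partitions.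
Context {d : measure_display} {T : measurableType d} {R : realType}.
Context {n : nat} {A : nat -> set T}.
Hypothesis A_part : fin_meas_partition n A.

Lemma partition_cover w : exists2 j, (j < n)%N & A j w.
Proof.
case: A_part => _ _ cov.
by have : (\bigcup_(i in [set k | (k < n)%N]) A i) w by rewrite cov.
Qed.

Lemma partition_uniq {i j w} : (i < n)%N -> (j < n)%N -> A i w -> A j w -> i = j.
Proof.
case: A_part => _ disj _ i_lt j_lt Aiw Ajw; case: (ltngtP i j) => // ij.
  by have : (A i `&` A j) w by []; rewrite disj ?ij.
by have : (A j `&` A i) w by []; rewrite disj ?ij.
Qed.

Lemma sum_indic_partition (c : nat -> R) {w j} : (j < n)%N -> A j w ->
  \sum_(i < n) c i * \1_(A i) w = c j.
Proof.
move=> j_lt Ajw; rewrite (bigD1 (Ordinal j_lt)) //= big1 ?addr0.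
  by rewrite indicE mem_set ?mulr1.
move=> i /eqP ij; rewrite indicE.
case: (boolP (w \in A i)) => [/set_mem Aiw|]; last by rewrite mulr0.
by case: ij; apply: val_inj; exact: partition_uniq (ltn_ord i) j_lt Aiw Ajw.
Qed.

Lemma fa_prob_partition_sum {P : set T -> R} : fa_prob P -> \sum_(i < n) P (A i) = 1.
Proof.
move=> P_fa; have [mA _ cov] := A_part; case: (P_fa) => P1 _ Padd.
pose U m := \bigcup_(i in [set k | (k < m)%N]) A i.
suff : forall m, (m <= n)%N -> measurable (U m) /\ P (U m) = \sum_(i < m) P (A i).
  by move=> /(_ n (leqnn n))[_ <-]; rewrite /U cov.
elim=> [_|m IH Sm_le].
  have -> : U 0%N = set0 by rewrite /U; apply/seteqP; split => w // [].
  by rewrite big_ord0 fa_prob0.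
have [mU PU] := IH (ltnW Sm_le).
have -> : U m.+1 = U m `|` A m.
  apply/seteqP; split=> w.
    by case=> i /=; rewrite ltnS leq_eqVlt => /orP[/eqP->|i_lt]; [right | left; exists i].
  by rewrite /U => -[[i /= i_lt Aiw]|Amw]; [exists i => //=; exact: ltnW | exists m => /=].
rewrite big_ord_recr /= -PU; split; first exact/measurableU/mA.
apply: Padd => //; first exact: mA.
apply/seteqP; split => // w [[i /= i_lt Aiw] Amw].
by have ij := partition_uniq (ltn_trans i_lt Sm_le) Sm_le Aiw Amw; rewrite ij ltnn in i_lt.
Qed.

End Partitions.

Section LowerSums.
Context {d : measure_display} {T : measurableType d} {R : realType}.
Implicit Types (P : set T -> R) (Y Z : T -> R).

Definition lower_sum P Y n (A : nat -> set T) := \sum_(i < n) inf (Y @` A i) * P (A i).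

Definition lower_sums P Y :=
  [set s | exists n A, fin_meas_partition n A /\ s = lower_sum P Y n A].

Lemma trivial_partition : fin_meas_partition 1 (fun=> [set: T]).
Proof.
split=> // [i j /andP[ij j_lt]|]; first by move: (leq_trans ij j_lt).
by apply/seteqP; split => // w _; exists 0%N.
Qed.

Lemma lower_sums_ne P Y : lower_sums P Y !=set0.
Proof.
exists (lower_sum P Y 1 (fun=> setT)), 1%N, (fun=> setT).
by split => //; exact: trivial_partition.
Qed.

(* inf set0 = 0, whence the bound M must be nonnegative. *)
Lemma inf_image_le_bound {A : set T} {Y} {M : R} : 0 <= M ->
  (forall w, - M <= Y w <= M) -> inf (Y @` A) <= M.
Proof.
move=> M0 Y_bd; have [[w Aw]|nA] := pselect (exists w, A w).
  apply: le_trans (_ : Y w <= M); last by case/andP: (Y_bd w).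
  apply: ge_inf; last by exists w.
  by exists (- M) => _ [u _ <-]; case/andP: (Y_bd u).
suff -> : Y @` A = set0 by rewrite inf0.
by apply/seteqP; split => // y [v Av _]; apply: nA; exists v.
Qed.

Lemma le_inf_image {A : set T} {Y Z} (M : R) :
  (forall w, - M <= Y w) -> (forall w, A w -> Y w <= Z w) -> inf (Y @` A) <= inf (Z @` A).
Proof.
move=> Y_lb YZ; have [[w Aw]|nA] := pselect (exists w, A w).
  apply: lb_le_inf; first by exists (Z w), w.
  move=> _ [v Av <-]; apply: le_trans (YZ v Av).
  by apply: ge_inf; [exists (- M) => _ [u _ <-] | exists v].
have empty F : F @` A = set0 by apply/seteqP; split => // y [v Av _]; apply: nA; exists v.
by rewrite !empty.
Qed.

Lemma lower_sums_has_ubound P Y : fa_prob P -> Bb Y -> has_ubound (lower_sums P Y).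
Proof.
move=> P_fa /Bb_bounded[M M0 Y_bd]; exists M => _ [n [A [A_part ->]]].
have [mA _ _] := A_part; case: (P_fa) => _ P_ge0 _.
apply: le_trans (_ : \sum_(i < n) M * P (A i) <= M).
  by apply: ler_sum => i _; apply: ler_wpM2r; [exact/P_ge0/mA | exact: inf_image_le_bound].
by rewrite -mulr_sumr (fa_prob_partition_sum A_part P_fa) mulr1.
Qed.

Lemma Eint_le {P Y Z} : fa_prob P -> Bb Y -> Bb Z -> (forall w, Y w <= Z w) ->
  Eint P Y <= Eint P Z.
Proof.
move=> P_fa BY BZ YZ; apply: ge_sup; first exact: lower_sums_ne.
move=> _ [n [A [A_part ->]]]; have [mA _ _] := A_part; case: (P_fa) => _ P_ge0 _.
have [M _ Y_bd] := Bb_bounded BY.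
apply: le_trans (_ : lower_sum P Z n A <= _); last first.
  by apply: ub_le_sup; [exact: lower_sums_has_ubound | exists n, A].
apply: ler_sum => i _; apply: ler_wpM2r; first exact/P_ge0/mA.
by apply: (le_inf_image M) => [w|w _]; [case/andP: (Y_bd w) | exact: YZ].
Qed.

End LowerSums.

Section LevelSets.
Context {d : measure_display} {T : measurableType d} {R : realType}.
Variables (Y : T -> R) (M e : R).
Hypotheses (mY : measurable_fun setT Y) (e_gt0 : 0 < e) (Y_bd : forall w, - M <= Y w <= M).

Definition level_set (i : nat) := [set w | i%:R * e - M <= Y w < i.+1%:R * e - M].

Definition level_count := (Num.trunc (2 * M / e)).+1.

Lemma level_set_index w : level_set (Num.trunc ((Y w + M) / e)) w.
Proof.
have /andP[MY YM] := Y_bd w.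
have YM_ge0 : 0 <= (Y w + M) / e by rewrite divr_ge0 ?(ltW e_gt0) //; lra.
have /andP[lo hi] := truncn_itv YM_ge0.
rewrite ler_pdivlMr // in lo; rewrite ltr_pdivrMr // in hi.
by rewrite /level_set /=; apply/andP; split; lra.
Qed.

Lemma level_partition : fin_meas_partition level_count level_set.
Proof.
split.
- move=> i _; rewrite (_ : level_set i = setT `&` Y @^-1` `[i%:R * e - M, i.+1%:R * e - M[).
    exact: mY.
  by apply/seteqP; split => w; rewrite /= ?in_itv /=; [move=> h; split | case].
- move=> i j /andP[ij _]; apply/seteqP; split => // w [/andP[_ Yi] /andP[Yj _]].
  have : i.+1%:R * e <= j%:R * e by rewrite ler_pM2r // ler_nat.
  lra.
apply/seteqP; split => // w _; exists (Num.trunc ((Y w + M) / e)); last exact: level_set_index.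
have /andP[MY YM] := Y_bd w.
rewrite /= ltnS; apply: le_truncn; rewrite ler_pM2r ?invr_gt0 //; lra.
Qed.

Lemma level_set_le_inf_add i w : level_set i w -> Y w <= inf (Y @` level_set i) + e.
Proof.
move=> /[dup] /andP[_ Y_lt] iw.
have : i%:R * e - M <= inf (Y @` level_set i).
  by apply: lb_le_inf => [|_ [u /andP[u_ge _] <-]]; [exists (Y w), w|].
by rewrite mulrSr mulrDl mul1r in Y_lt; lra.
Qed.

End LevelSets.
Arguments level_partition {d T R Y M e}.

Section PositiveFunctional.
Context {d : measure_display} {T : measurableType d} {R : realType}.
Variable f : (T -> R) -> R.
Hypotheses (f_lin : linear_on (@Bb d T R) f)
  (f_mono : forall Y Z, Bb Y -> Bb Z -> (forall w, Y w <= Z w) -> f Y <= f Z)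
  (f_cst : forall c, f (cst c) = c).

Definition indic_measure (A : set T) := f \1_A.

Lemma indic_measure_fa : fa_prob indic_measure.
Proof.
split=> [|A mA|A B mA mB AB].
- by rewrite /indic_measure indicT f_cst.
- rewrite /indic_measure -(f_cst 0); apply: f_mono => [||w]; first exact: Bb_cst.
    exact: Bb_indic.
  by rewrite indicE.
rewrite /indic_measure -(linear_onD f_lin); try exact: Bb_indic.
congr f; apply/funext => w; rewrite !fctE !indicE in_setU.
have : (w \in A) && (w \in B) = false by rewrite -in_setI AB in_set0.
by case: (w \in A); case: (w \in B); rewrite ?addr0 ?add0r.
Qed.

Lemma positive_functional_simple {n} {A : nat -> set T} (c : nat -> R) :
  (forall i, (i < n)%N -> measurable (A i)) ->
  Bb (fun w => \sum_(i < n) c i * \1_(A i) w) /\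
  f (fun w => \sum_(i < n) c i * \1_(A i) w) = \sum_(i < n) c i * indic_measure (A i).
Proof.
elim: n => [_|n IH mA].
  under [fun w => _]funext do rewrite big_ord0.
  by rewrite big_ord0 f_cst; split => //; exact: Bb_cst.
have [Bsum fsum] := IH (fun i i_lt => mA i (ltnW i_lt)).
have BA : Bb (\1_(A n) : T -> R) := Bb_indic (mA n (ltnSn n)).
have -> : (fun w => \sum_(i < n.+1) c i * \1_(A i) w) =
    c n *: (\1_(A n) : T -> R) + (fun w => \sum_(i < n) c i * \1_(A i) w).
  by apply/funext => w; rewrite big_ord_recr /= addrC.
by rewrite f_lin // fsum big_ord_recr /= addrC; split => //; apply/Bb_add/Bsum/Bb_scale.
Qed.

Lemma lower_sum_le_functional Y : Bb Y -> forall s, lower_sums indic_measure Y s -> s <= f Y.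
Proof.
move=> BY _ [n [A [A_part ->]]]; have [mA _ _] := A_part.
have [M _ Y_bd] := Bb_bounded BY.
have [Bsum fsum] := positive_functional_simple (fun i => inf (Y @` A i)) mA.
rewrite /lower_sum -fsum; apply: f_mono => // w.
have [j j_lt Ajw] := partition_cover A_part w.
rewrite (sum_indic_partition A_part (fun i => inf (Y @` A i)) j_lt Ajw).
by apply: ge_inf; [exists (- M) => _ [u _ <-]; case/andP: (Y_bd u) | exists w].
Qed.

(* Lower sums over the level sets of Y of mesh e fall short of f Y by at most e. *)
Theorem Eint_indic_measure Y : Bb Y -> Eint indic_measure Y = f Y.
Proof.
move=> BY; have f_ub : has_ubound (lower_sums indic_measure Y).
  by exists (f Y); apply: lower_sum_le_functional.
apply/eqP; rewrite eq_le; apply/andP; split.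
  by apply: ge_sup; [exact: lower_sums_ne | exact: lower_sum_le_functional].
apply/ler_addgt0Pr => e e_gt0; have [mY _] := BY; have [M _ Y_bd] := Bb_bounded BY.
have A_part := level_partition mY e_gt0 Y_bd.
have [mA _ _] := A_part.
set A := level_set Y M e; set N := level_count M e.
have [Bsum fsum] := positive_functional_simple (fun i => inf (Y @` A i) + e) mA.
apply: le_trans (_ : lower_sum indic_measure Y N A + e <= _); last first.
  by rewrite lerD2r; apply: ub_le_sup => //; exists N, A.
have -> : lower_sum indic_measure Y N A + e =
    \sum_(i < N) (inf (Y @` A i) + e) * indic_measure (A i).
  rewrite /lower_sum [RHS](eq_bigr _ (fun i _ => mulrDl _ _ _)) big_split /=.
  by rewrite -mulr_sumr (fa_prob_partition_sum A_part indic_measure_fa) mulr1.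
rewrite -fsum; apply: f_mono => // w.
have [j j_lt Ajw] := partition_cover A_part w.
rewrite (sum_indic_partition A_part (fun i => inf (Y @` A i) + e) j_lt Ajw).
exact: level_set_le_inf_add.
Qed.

End PositiveFunctional.

Section MaximalRisk.
Context {d : measure_display} {T : measurableType d} {R : realType}.
Variables (C : set (T -> R)) (H : (T -> R) -> R).
Hypotheses (C_lin : lin_subspace_with_consts C) (H_premium : premium_principle C H).
Implicit Types (Y Z : T -> R) (P : set T -> R).

Let C_Bb {Y} : C Y -> @Bb d T R Y. Proof. by case: C_lin => + _ _ _; apply. Qed.
Let CD {Y Z} : C Y -> C Z -> C (Y \+ Z). Proof. by case: C_lin => _ + _ _; apply. Qed.
Let CZ a {Y} : C Y -> C (fun w => a * Y w). Proof. by case: C_lin => _ _ + _; apply. Qed.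
Let Ccst m : C (fun=> m). Proof. by case: C_lin. Qed.
Let H_cash {Y} m : C Y -> H (fun w => Y w + m) = H Y + m.
Proof. by case: H_premium => + _ _; apply. Qed.
Let H_ge0 {Y} : C Y -> (forall w, 0 <= Y w) -> 0 <= H Y.
Proof. by case: H_premium => _ _; apply. Qed.

Definition premiums_above Y := [set H Z | Z in [set Z | C Z /\ forall w, Y w <= Z w]].

Definition rmax Y := inf (premiums_above Y).

Lemma H_ge_lbound Z M : C Z -> (forall w, - M <= Z w) -> - M <= H Z.
Proof.
move=> CZ0 Z_ge; suff : 0 <= H Z + M by lra.
by rewrite -H_cash //; apply: H_ge0 => [|w]; [exact: CD (Ccst M) | have := Z_ge w; rewrite /=; lra].
Qed.

Lemma premiums_above_ne Y : Bb Y -> premiums_above Y !=set0.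
Proof.
move=> /Bb_bounded[M _ Y_bd]; exists (H (fun=> M)), (fun=> M) => //.
by split => // w; case/andP: (Y_bd w).
Qed.

Lemma premiums_above_lbound Y : Bb Y -> has_lbound (premiums_above Y).
Proof.
move=> /Bb_bounded[M _ Y_bd]; exists (- M) => _ [Z [CZ0 YZ] <-].
by apply: H_ge_lbound => // w; case/andP: (Y_bd w) => + _; move/le_trans; apply.
Qed.

Lemma rmax_le_premium Y Z : Bb Y -> C Z -> (forall w, Y w <= Z w) -> rmax Y <= H Z.
Proof. by move=> BY CZ0 YZ; apply: ge_inf; [exact: premiums_above_lbound | exists Z]. Qed.

Lemma rmax_ge Y b : Bb Y ->
  (forall Z, C Z -> (forall w, Y w <= Z w) -> b <= H Z) -> b <= rmax Y.
Proof.
move=> BY b_le; apply: lb_le_inf; first exact: premiums_above_ne.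
by move=> _ [Z [CZ0 YZ] <-]; apply: b_le.
Qed.

Lemma RMaxE {Y} : Bb Y -> RMax C H Y = (rmax Y)%:E.
Proof.
move=> BY; rewrite /RMax -ereal_inf_EFin; last exact: premiums_above_ne.
  by rewrite /premiums_above image_comp.
exact: premiums_above_lbound.
Qed.

Lemma rmax_le_H {Y} : C Y -> rmax Y <= H Y.
Proof. by move=> CY; apply: rmax_le_premium => //; exact: C_Bb. Qed.

Lemma le_rmax Y Z : Bb Y -> Bb Z -> (forall w, Y w <= Z w) -> rmax Y <= rmax Z.
Proof.
move=> BY BZ YZ; apply: rmax_ge => // Z0 CZ0 ZZ0; apply: rmax_le_premium => // w.
exact: le_trans (YZ w) (ZZ0 w).
Qed.

Lemma rmax_cash Y m : Bb Y -> rmax (Y + cst m) = rmax Y + m.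
Proof.
move=> BY; have BYm : Bb (Y + cst m) by apply/Bb_add/Bb_cst.
apply/eqP; rewrite eq_le; apply/andP; split.
  rewrite -lerBlDr; apply: rmax_ge => // Z CZ0 YZ; rewrite lerBlDr -H_cash //.
  by apply: rmax_le_premium => [||w]; [| exact: CD (Ccst m) | rewrite /= lerD2r].
apply: rmax_ge => // Z CZ0 YZ.
have : rmax Y <= H (fun w => Z w + - m).
  by apply: rmax_le_premium => [||w]; [| exact: CD (Ccst (- m)) | have := YZ w; rewrite !fctE; lra].
by rewrite H_cash //; lra.
Qed.

Lemma rmax_convex (H_convex : convex_on C H) Y Z (l : R) : Bb Y -> Bb Z -> 0 < l < 1 ->
  rmax (l *: Y + (1 - l) *: Z) <= l * rmax Y + (1 - l) * rmax Z.
Proof.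
move=> BY BZ /andP[l_gt0 l_lt1]; have l'_gt0 : 0 < 1 - l by rewrite subr_gt0.
have Bcomb : Bb (l *: Y + (1 - l) *: Z) by apply/Bb_add; apply: Bb_scale.
set K := rmax _.
(* For fixed Z0 >= Z, optimise over Y0 >= Y, then over Z0. *)
have K_le Z0 : C Z0 -> (forall w, Z w <= Z0 w) -> (K - (1 - l) * H Z0) / l <= rmax Y.
  move=> CZ0 ZZ0; apply: rmax_ge => // Y0 CY0 YY0; rewrite ler_pdivrMr //.
  have : K <= H (fun w => l * Y0 w + (1 - l) * Z0 w).
    apply: rmax_le_premium => [||w]; [done | exact: CD (CZ l CY0) (CZ (1 - l) CZ0) |].
    rewrite !fctE /GRing.scale /=; apply: lerD; apply: ler_wpM2l => //; exact: ltW.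
  have l01 : 0 <= l <= 1 by rewrite !ltW.
  have := H_convex Y0 Z0 l CY0 CZ0 l01; lra.
have : (K - l * rmax Y) / (1 - l) <= rmax Z.
  apply: rmax_ge => // Z0 CZ0 ZZ0; rewrite ler_pdivrMr //.
  by have := K_le Z0 CZ0 ZZ0; rewrite ler_pdivrMr //; lra.
by rewrite ler_pdivrMr //; lra.
Qed.

Lemma Hstar_ge P {Y} : C Y -> ((Eint P Y - H Y)%:E <= Hstar C H P)%E.
Proof. by move=> CY; apply: ereal_sup_ubound; exists Y. Qed.

Lemma Hstar_fin {P} : (Hstar C H P < +oo)%E -> exists r, Hstar C H P = r%:E.
Proof.
have C0 : C (fun=> 0) by case: C_lin.
move: (Hstar_ge P C0); case: (Hstar C H P) => [r _ _|//|]; first by exists r.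
by rewrite leeNy_eq.
Qed.

(* Weak duality: E_P Y0 - H^*(P) <= H Y0 for every Y0 >= Y in C. *)
Lemma Eint_sub_Hstar_le_rmax {P r Y} : fa_prob P -> Hstar C H P = r%:E -> Bb Y ->
  Eint P Y - r <= rmax Y.
Proof.
move=> P_fa Hstar_r BY; apply: rmax_ge => // Z CZ0 YZ.
have := Hstar_ge P CZ0; rewrite Hstar_r lee_fin.
by have := Eint_le P_fa BY (C_Bb CZ0) YZ; lra.
Qed.

Lemma DMinE Y : C Y -> DMin C H Y = (H Y - rmax Y)%:E.
Proof. by move=> CY; rewrite /DMin (RMaxE (C_Bb CY)). Qed.

Lemma DPE P Y : C Y -> DP H P Y = H Y - Eint P Y.
Proof. by move=> CY; rewrite /DP H_cash. Qed.

Lemma DMin_le P Y : C Y -> calP C H P -> (DMin C H Y <= (DP H P Y)%:E + Hstar C H P)%E.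
Proof.
move=> CY [P_fa /Hstar_fin[r Hstar_r]].
have := Eint_sub_Hstar_le_rmax P_fa Hstar_r (C_Bb CY).
by rewrite DMinE // DPE // Hstar_r -EFinD lee_fin; lra.
Qed.

Section Subgradient.
Variables (X : T -> R) (g : (T -> R) -> R).
Hypotheses (CX : C X) (g_lin : linear_on (@Bb d T R) g)
  (g_sub : forall {h}, Bb h -> g h <= rmax (X + h) - rmax X).

Let BX : Bb X. Proof. exact: C_Bb. Qed.

Lemma subgradient_le {Y Z} : Bb Y -> Bb Z -> (forall w, Y w <= Z w) -> g Y <= g Z.
Proof.
move=> BY BZ YZ; have BYZ := Bb_add BY (Bb_opp BZ).
have := g_sub BYZ; rewrite (linear_onD g_lin BY (Bb_opp BZ)) (linear_onN (Bb_cst 0) g_lin BZ).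
have : rmax (X + (Y - Z)) <= rmax X.
  by apply: le_rmax => [||w]; [exact: Bb_add | | have := YZ w; rewrite !fctE; lra].
lra.
Qed.

Lemma subgradient_cst c : g (cst c) = c.
Proof.
have cash c' : g (cst c') <= c'.
  by have := g_sub (Bb_cst c'); rewrite rmax_cash // addrAC subrr add0r.
have := cash (- c); rewrite (_ : cst (- c) = - cst c) // (linear_onN (Bb_cst 0) g_lin (Bb_cst c)).
by have := cash c; lra.
Qed.

Let P := indic_measure g.

Lemma subgradient_fa_prob : fa_prob P.
Proof. exact: indic_measure_fa g g_lin (@subgradient_le) subgradient_cst. Qed.

Lemma Eint_subgradient {Y} : Bb Y -> Eint P Y = g Y.
Proof. exact: Eint_indic_measure g g_lin (@subgradient_le) subgradient_cst Y. Qed.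

(* The subgradient inequality bounds E_P Y - H Y by g X - rmax X; weak duality
   gives the converse. *)
Lemma Hstar_subgradient : Hstar C H P = (g X - rmax X)%:E.
Proof.
have Hstar_le : (Hstar C H P <= (g X - rmax X)%:E)%E.
  apply: ge_ereal_sup => _ [Y CY <-]; rewrite lee_fin (Eint_subgradient (C_Bb CY)).
  have := g_sub (Bb_add (C_Bb CY) (Bb_opp BX)).
  rewrite (linear_onD g_lin (C_Bb CY) (Bb_opp BX)) (linear_onN (Bb_cst 0) g_lin BX) subrKC.
  by have := rmax_le_H CY; lra.
have [r Hstar_r] := Hstar_fin (le_lt_trans Hstar_le (ltry _)).
have := Eint_sub_Hstar_le_rmax subgradient_fa_prob Hstar_r BX.
by move: Hstar_le; rewrite Hstar_r Eint_subgradient // lee_fin => ? ?; congr EFin; lra.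
Qed.

Lemma subgradient_attains_DMin :
  calP C H P /\ DMin C H X = ((DP H P X)%:E + Hstar C H P)%E.
Proof.
split; first by split; [exact: subgradient_fa_prob | rewrite Hstar_subgradient ltry].
by rewrite Hstar_subgradient DMinE // DPE // Eint_subgradient // -EFinD; congr EFin; lra.
Qed.

End Subgradient.
End MaximalRisk.
Arguments rmax_convex {d T R C H}.
Arguments subgradient_attains_DMin {d T R C H} C_lin H_premium {X g}.

Theorem corollary3p4 (d : measure_display) (T : measurableType d) (R : realType)
  (C : set (T -> R)) (H : (T -> R) -> R) :
  lin_subspace_with_consts C ->
  premium_principle C H ->
  convex_on C H ->
  forall X, C X ->
    (exists2 P, calP C H P &
       DMin C H X = ((DP H P X)%:E + Hstar C H P)%E) /\
    (forall P, calP C H P ->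
       (DMin C H X <= (DP H P X)%:E + Hstar C H P)%E).
Proof.
move=> C_lin H_premium H_convex X CX; split; last by move=> P; exact: DMin_le.
have BX : Bb X by case: C_lin => + _ _ _; apply.
have [g g_lin g_sub] := convex_subgradient (Bb_cst 0) (@Bb_add d T R) (@Bb_scale d T R)
  (rmax_convex C_lin H_premium H_convex) BX.
have [P_calP P_eq] := subgradient_attains_DMin C_lin H_premium CX g_lin g_sub.
by exists (indic_measure g).
Qed.
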